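(* Let $n$ be a positive integer, $0\le m\le\lfloor n/2\rfloor$ and $0\le k\le m$. Let $M^{(n-m,m)}$ be the complex vector space with basis $\{e_\sigma\}$ indexed by the $m$-element subsets $\sigma$ of $\{1,\dots,n\}$, and let $\Omega=\{n-m+1,\dots,n\}$. Define the linear map $\pi:\mathbb{C}[S_n]\to M^{(n-m,m)}$ by $\pi(g)=e_{g(\Omega)}$ for $g\in S_n$. Let $T_k$ be the Young tableau of shape $(n-k,k)$ whose first row contains $1,\dots,n-k$ and whose second row contains $n-k+1,\dots,n$, with row subgroup $R(T_k)$ and column subgroup $C(T_k)$, and let $$c_k=\Big(\sum_{q\in C(T_k)}\operatorname{sgn}(q)\,q\Big)\Big(\sum_{p\in R(T_k)}p\Big)\in\mathbb{C}[S_n].$$ Then the coefficient of $e_\Omega$ in $\pi(c_k)$ is $(m-k)!\,k!\,(n-m)!$.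
   Context: The row subgroup $R(T_k)$ (resp. column subgroup $C(T_k)$) consists of the permutations of $\{1,\dots,n\}$ that preserve each row (resp. each column) of $T_k$ as a set. Products in the group ring are composition of permutations, $qp=q\circ p$. *)

(* Points {1,...,n} are modelled 0-based as 'I_n. *)
From HB Require Import structures.
From mathcomp Require Import all_boot all_order all_algebra all_fingroup all_field.
Set Implicit Arguments. Unset Strict Implicit. Unset Printing Implicit Defensive.
Import GRing.Theory.
Local Open Scope ring_scope.

Notation grpring n := {ffun {perm 'I_n} -> algC}.

Definition gr_of n (g : {perm 'I_n}) : grpring n := [ffun h => (h == g)%:R].

(* Paper's composition q p = q \o p.  In mathcomp (y * x)%g is "first y then x",
   i.e. (y * x)%g = x \o y. *)
Definition compose n (x y : {perm 'I_n}) : {perm 'I_n} := (y * x)%g.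

Definition gr_mul n (a b : grpring n) : grpring n :=
  [ffun g => \sum_(x : {perm 'I_n}) \sum_(y : {perm 'I_n} | compose x y == g) a x * b y].

Definition sgn n (q : {perm 'I_n}) : algC := (-1) ^+ odd_perm q.

(* Omega = {n-m+1,...,n}, 0-based {n-m,...,n-1} *)
Definition Omega n m : {set 'I_n} := [set i : 'I_n | n - m <= i]%N.

(* M^(n-m,m): coordinates indexed by subsets (only m-subsets ever occur);
   piM is the linear extension of g |-> e_{g(Omega)}. *)
Definition piM n m (a : grpring n) : {ffun {set 'I_n} -> algC} :=
  [ffun s : {set 'I_n} => \sum_(g : {perm 'I_n}) a g * ((g @: Omega n m) == s)%:R].

Definition preserves_blocks n (lab : 'I_n -> nat) : {set {perm 'I_n}} :=
  [set s : {perm 'I_n} | [forall i : 'I_n,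
     s @: [set x : 'I_n | lab x == lab i] == [set x : 'I_n | lab x == lab i]]].

(* Tableau T_k of shape (n-k,k): row 1 = {1..n-k}, row 2 = {n-k+1..n}.
   0-based: entry i lies in row (i >= n-k) and in column i (row 1) or
   i - (n-k) (row 2). *)
Definition Trow n k (i : 'I_n) : nat := if (i < n - k)%N then 0%N else 1%N.
Definition Tcol n k (i : 'I_n) : nat := if (i < n - k)%N then (i : nat) else (i - (n - k))%N.

Definition RT n k := preserves_blocks (@Trow n k).
Definition CT n k := preserves_blocks (@Tcol n k).

Definition gr_scale n (c : algC) (a : grpring n) : grpring n := [ffun h => c * a h].

Definition c_elt n k : grpring n :=
  gr_mul (\sum_(q in CT n k) gr_scale (sgn q) (gr_of q)) (\sum_(p in RT n k) gr_of p).

(* Expanding c_k, the coefficient of e_Omega is the sum of sgn q over the pairs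
   (q, p) in C(T_k) x R(T_k) with (q o p)(Omega) = Omega.  If q <> 1, it moves
   some j of the second row {n-k+1..n} of T_k to a point <= k of the first row,
   which lies outside Omega because k <= n - m; since p permutes the second row,
   some point of that row (a subset of Omega) is sent to j by p, so q o p does
   not stabilise Omega.  Hence only q = 1 contributes, and the coefficient is the
   number of permutations preserving each of the blocks {n-k+1..n},
   {n-m+1..n-k} and {1..n-m}, i.e. k! (m-k)! (n-m)!. *)
From mathcomp Require Import all_boot all_order all_algebra all_fingroup all_field.
From mathcomp Require Import zify.
Set Implicit Arguments. Unset Strict Implicit. Unset Printing Implicit Defensive.
Import GRing.Theory.

Section SetwiseStabilisers.
Local Open Scope group_scope.

Variable T : finType.
Implicit Types (A B S : {set T}) (s y : {perm T}).

Lemma perm_imset_eq s S : (s @: S == S) = (s \in 'N(S | 'P)).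
Proof.
apply/eqP/idP => [sS | /astabs_setact]; last by rewrite setactE.
by apply/astabsP => x /=; rewrite apermE -{1}sS mem_imset //; apply: perm_inj.
Qed.

Lemma astabs_perm_mem S y x : y \in 'N(S | 'P) -> (y x \in S) = (x \in S).
Proof. exact: astabs_act. Qed.

Lemma restr_permEif S y x :
  y \in 'N(S | 'P) -> restr_perm S y x = if x \in S then y x else x.
Proof.
move=> yS; case: ifPn => [xS | /(out_perm (restr_perm_on S y))//].
exact: restr_permE.
Qed.

Lemma SymS A B : A \subset B -> Sym A \subset Sym B.
Proof. by move=> AB; apply/subsetP => s; rewrite !inE => /subset_trans; apply. Qed.

Lemma Sym_TI A B : [disjoint A & B] -> Sym A :&: Sym B = 1.
Proof.
move=> dAB; apply/trivgP/subsetP => s; rewrite !inE => /andP [sA sB].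
apply/eqP/permP => x; rewrite perm1.
have [xA | xA] := boolP (x \in A); last exact: out_perm sA xA.
by apply: out_perm sB _; rewrite (disjointFr dAB xA).
Qed.

Lemma Sym_cent A B : [disjoint A & B] -> Sym A \subset 'C(Sym B).
Proof.
move=> dAB; apply/centsP => s; rewrite inE => sA t; rewrite inE => tB.
exact: perm_onC tB dAB.
Qed.

Lemma Sym_sub_astabs A B : (A \subset B) || [disjoint A & B] -> Sym A \subset 'N(B | 'P).
Proof.
case/orP => [AB | dAB]; last first.
  rewrite SymE; apply: subset_trans (astab_sub _ _); apply: astabS.
  by rewrite -disjoints_subset disjoint_sym.
apply: subset_trans (SymS AB) _; rewrite SymE -astabsC.
exact: astab_sub.
Qed.

Section ThreeBlocks.

Variables A C : {set T}.
Hypothesis dAC : [disjoint A & C].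
Let D := ~: (A :|: C).

Let dAD : [disjoint A & D]. Proof. by rewrite disjoints_subset setCK subsetUl. Qed.
Let dCD : [disjoint C & D]. Proof. by rewrite disjoints_subset setCK subsetUr. Qed.

Lemma restr_perm_blocksE y : y \in 'N(A | 'P) :&: 'N(C | 'P) ->
  restr_perm A y * restr_perm C y * restr_perm (~: (A :|: C)) y = y.
Proof.
rewrite inE => /andP [yA yC].
have yD : y \in 'N(D | 'P).
  by rewrite astabsC; apply: (subsetP (astabsU _ _ _)); rewrite inE yA.
apply/permP => x; rewrite !permM.
have [xA | xA] := boolP (x \in A).
  have yxA : y x \in A by rewrite astabs_perm_mem.
  rewrite (restr_permEif x yA) xA (restr_permEif _ yC) (restr_permEif _ yD).
  by rewrite (disjointFr dAC yxA) (disjointFr dAD yxA).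
rewrite (restr_permEif x yA) (negPf xA).
have [xC | xC] := boolP (x \in C).
  have yxC : y x \in C by rewrite astabs_perm_mem.
  by rewrite (restr_permEif x yC) xC (restr_permEif _ yD) (disjointFr dCD yxC).
have xD : x \in D by rewrite !inE negb_or xA xC.
by rewrite (restr_permEif x yC) (negPf xC) (restr_permEif x yD) xD.
Qed.

Lemma astabs2_Sym_mul :
  'N(A | 'P) :&: 'N(C | 'P) = (Sym A <*> Sym C) * Sym (~: (A :|: C)).
Proof.
apply/eqP; rewrite eqEsubset; apply/andP; split.
  apply/subsetP => y yAC.
  rewrite cent_joinEl ?Sym_cent // -(restr_perm_blocksE yAC).
  by rewrite !mem_mulg // inE restr_perm_on.
have SymAC (X : {set T}) :
    (X \subset A) || [disjoint X & A] -> (X \subset C) || [disjoint X & C] ->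
  Sym X \subset 'N(A | 'P) :&: 'N(C | 'P).
  by move=> XA XC; apply/subsetIP; split; apply: Sym_sub_astabs.
rewrite mul_subG ?join_subG ?SymAC //.
all: by rewrite ?subxx ?dAC ?orbT // disjoint_sym ?dAC ?dAD ?dCD ?orbT.
Qed.

Lemma card_astabs2 :
  #|'N(A | 'P) :&: 'N(C | 'P)| = (#|A|`! * #|C|`! * #|~: (A :|: C)|`!)%N.
Proof.
have TI_ACD : (Sym A <*> Sym C) :&: Sym D = 1.
  apply/trivgP; rewrite -(@Sym_TI (A :|: C) D); last by rewrite disjoints_subset setCK.
  by rewrite setSI // join_subG !SymS ?subsetUl ?subsetUr.
rewrite astabs2_Sym_mul TI_cardMg //= cent_joinEl ?Sym_cent //.
by rewrite TI_cardMg ?Sym_TI // !card_Sym.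
Qed.

End ThreeBlocks.
End SetwiseStabilisers.

Section TwoRowTableau.
Local Open Scope group_scope.

Lemma preserves_blocksP n (lab : 'I_n -> nat) (s : {perm 'I_n}) :
  reflect (forall i, lab (s i) = lab i) (s \in preserves_blocks lab).
Proof.
rewrite inE; apply: (iffP forallP) => [sP i | sP i]; last first.
  by rewrite perm_imset_eq; apply/astabsP => j /=; rewrite !inE sP.
have := sP i; rewrite perm_imset_eq => /(astabs_perm_mem i).
by rewrite !inE eqxx => /eqP.
Qed.

Variable n : nat.

Lemma card_Omega m : (m <= n)%N -> #|Omega n m| = m.
Proof.
move=> mn; rewrite -sum1_card.
rewrite (eq_bigl (fun i : 'I_n => predT (i : nat) && (n - m <= i))%N) => [|i]; last first.
  by rewrite inE.
by rewrite -(big_geq_mkord _ _ predT (fun=> 1%N)) sum_nat_const_nat muln1 subKn.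
Qed.

Lemma Omega_subset k m : (k <= m)%N -> Omega n k \subset Omega n m.
Proof. by move=> km; apply/subsetP => i; rewrite !inE; lia. Qed.

Variable k : nat.

Lemma RT_astabs : RT n k = 'N(Omega n k | 'P).
Proof.
have Trow_Omega i : Trow k i = (i \in Omega n k) :> nat.
  by rewrite /Trow inE ltnNge; case: leqP.
apply/setP => y; apply/preserves_blocksP/astabsP => yR i /=.
  by have := yR i; rewrite !Trow_Omega; do 2 case: (_ \in _).
by rewrite !Trow_Omega yR.
Qed.

Lemma one_in_CT : 1 \in CT n k.
Proof. by apply/preserves_blocksP => i; rewrite perm1. Qed.

Lemma CT_moved_Omega_lt (x : {perm 'I_n}) (j : 'I_n) :
  x \in CT n k -> j \in Omega n k -> x j != j -> (x j < k)%N.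
Proof.
move=> /preserves_blocksP/(_ j) + /[!inE] jk xj; rewrite /Tcol (ltnNge j) jk /=.
have := ltn_ord j; case: (ltnP (x j) (n - k)) => xjk jn e; first lia.
case/eqP: xj; apply: val_inj => /=; lia.
Qed.

Lemma CT_neq1_moves_Omega (x : {perm 'I_n}) :
  x \in CT n k -> x != 1 -> exists2 j, j \in Omega n k & x j != j.
Proof.
move=> xC x1; have [i xi | fixx] := pickP (fun i => x i != i); last first.
  by case/eqP: x1; apply/permP => i; rewrite perm1; apply/eqP/negbFE/fixx.
have [iO | iO] := boolP (i \in Omega n k); first by exists i.
exists (x i); last by rewrite (inj_eq perm_inj).
move: xC iO xi => /preserves_blocksP/(_ i); rewrite inE /Tcol -ltnNge => + ik.
rewrite ik inE; case: ltnP => [_ e /eqP[] | //]; exact: val_inj.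
Qed.

Lemma CT_eq1_of_astabs_Omega m (x y : {perm 'I_n}) : (k <= m)%N -> (k <= n - m)%N ->
  x \in CT n k -> y \in RT n k -> compose x y \in 'N(Omega n m | 'P) -> x = 1.
Proof.
move=> km kn xC; rewrite RT_astabs => yR xyN; apply/eqP; apply: contraT => x1.
have [j jk xj] := CT_neq1_moves_Omega xC x1.
have xjk := CT_moved_Omega_lt xC jk xj.
have wk : y^-1 j \in Omega n k by rewrite astabs_perm_mem ?groupV.
have := subsetP (Omega_subset km) _ wk.
by rewrite -(astabs_perm_mem _ xyN) /compose permM permKV inE; lia.
Qed.

End TwoRowTableau.

Local Open Scope ring_scope.

Section GroupRing.

Variable n : nat.
Implicit Types (a b : grpring n) (g x y : {perm 'I_n}) (A : {pred {perm 'I_n}}).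

Lemma sum_gr_scale_ofE A (F : {perm 'I_n} -> algC) x :
  (\sum_(q in A) gr_scale (F q) (gr_of q)) x = (x \in A)%:R * F x.
Proof.
rewrite sum_ffunE big_mkcond (bigD1 x) //= !ffunE eqxx mulr1 big1 => [|q qx].
  by rewrite addr0; case: (x \in A); rewrite ?mul1r ?mul0r.
by rewrite !ffunE eq_sym (negPf qx) mulr0 if_same.
Qed.

Lemma sum_gr_ofE A x : (\sum_(p in A) gr_of p) x = (x \in A)%:R.
Proof.
rewrite -[RHS]mulr1 -(sum_gr_scale_ofE A (fun=> 1)); congr (fun_of_fin _ x).
by apply: eq_bigr => p _; apply/ffunP => h; rewrite !ffunE mul1r.
Qed.

Lemma piM_gr_mul m a b (s : {set 'I_n}) :
  piM m (gr_mul a b) s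
  = \sum_x \sum_y a x * b y * ((compose x y @: Omega n m) == s)%:R.
Proof.
rewrite ffunE; under eq_bigr => g _ do rewrite ffunE big_distrl /=.
rewrite exchange_big; apply: eq_bigr => x _.
under eq_bigr => g _ do rewrite big_distrl /= big_mkcond /=.
rewrite exchange_big; apply: eq_bigr => y _.
by rewrite -big_mkcond (big_pred1 (compose x y)) // => g; rewrite /= eq_sym.
Qed.

End GroupRing.

Theorem lemma5 (n m k : nat) (hn : (0 < n)%N) (hm : (m <= n./2)%N) (hk : (k <= m)%N) :
  piM m (c_elt n k) (Omega n m) = ((m - k)`! * k`! * (n - m)`!)%:R.
Proof.
have kn : (k <= n - m)%N by lia.
have mn : (m <= n)%N by lia.
rewrite piM_gr_mul.
under eq_bigr => x _ do under eq_bigr => y _ do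
  rewrite sum_gr_scale_ofE sum_gr_ofE perm_imset_eq.
rewrite (bigD1 1%g) //= [X in _ + X]big1 ?addr0 => [|x x1]; last first.
  apply: big1 => y _.
  have [xC | _] := boolP (x \in CT n k); last by rewrite !mul0r.
  have [yR | _] := boolP (y \in RT n k); last by rewrite mulr0 mul0r.
  have [xyN | _] := boolP (compose x y \in 'N(Omega n m | 'P))%g; last by rewrite mulr0.
  by case/eqP: x1; apply: CT_eq1_of_astabs_Omega hk kn xC yR xyN.
rewrite one_in_CT /sgn odd_perm1 expr0.
under eq_bigr => y _ do rewrite !mul1r /compose mulg1 -natrM mulnb -in_setI.
rewrite -natr_sum; set H := (RT n k :&: _)%g.
rewrite (eq_bigr (fun y => if y \in H then 1 else 0)%N) // -big_mkcond sum1_card.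
rewrite /H RT_astabs -[X in _ :&: X]astabsC card_astabs2; last first.
  by rewrite disjoints_subset setCK Omega_subset.
have cardCO : #|~: Omega n m| = (n - m)%N by rewrite cardsCs setCK card_ord card_Omega.
rewrite cardCO setCU setCK setIC -setDE cardsD (setIidPr (Omega_subset n hk)).
by rewrite !card_Omega ?(leq_trans hk mn) // mulnC mulnA.
Qed.
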